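(* Let $\alpha\in(0,1)$ be irrational. Then: (a) For all $1\le t<q_n$ we have $s_{nt}=s_{n(q_n-t)}$, $h_{nt}=h_{n(q_n-t)}$ and $\xi_{nt}=-\xi_{n(q_n-t)}$. (b) If $n$ is sufficiently large, then $s_{nt}>s_{n0}$ for all $1\le t<q_n$.
   Context: $\alpha=[0;a_1,a_2,\ldots]$, with $q_0=0$, $q_1=1$, $q_{n+1}=a_nq_n+q_{n-1}$ and $p_0=1$, $p_1=0$, $p_{n+1}=a_np_n+p_{n-1}$. $\Lambda_n=q_n\alpha-p_n$. For $t\in\{0,\ldots,q_n-1\}$ define: - $\xi_{nt}=\{tq_{n-1}/q_n\}-\frac12$; - $s_{nt}=2\sin\big(\pi[t/q_n-|\Lambda_n|\xi_{nt}]\big)$; - $h_{nt}=\cot(\pi t/q_n)\sin(\pi|\Lambda_n|\xi_{nt})$. *)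

From Stdlib Require Import Reals Lra Lia ZArith.
Open Scope R_scope.

(* Gauss map iterates: cf_x alpha 0 = alpha = x_1, x_{k+1} = 1/x_k - floor(1/x_k). *)
Fixpoint cf_x (alpha : R) (k : nat) : R :=
  match k with
  | O => alpha
  | S j => let y := / cf_x alpha j in y - IZR (Int_part y)
  end.

(* Partial quotients: alpha = [0; a_1, a_2, ...], a_n = floor(1 / x_n), n >= 1.
   (Int_part is the floor function.)  The value at n = 0 is never used. *)
Definition cf_a (alpha : R) (n : nat) : nat :=
  Z.to_nat (Int_part (/ cf_x alpha (n - 1))).

Fixpoint cf_q (alpha : R) (n : nat) : nat :=
  match n with
  | O => 0%nat
  | S m => match m with
           | O => 1%nat
           | S k => (cf_a alpha m * cf_q alpha m + cf_q alpha k)%nat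
           end
  end.

Fixpoint cf_p (alpha : R) (n : nat) : nat :=
  match n with
  | O => 1%nat
  | S m => match m with
           | O => 0%nat
           | S k => (cf_a alpha m * cf_p alpha m + cf_p alpha k)%nat
           end
  end.

Definition Lambda (alpha : R) (n : nat) : R :=
  INR (cf_q alpha n) * alpha - INR (cf_p alpha n).

Definition frac_part (x : R) : R := x - IZR (Int_part x).

Definition cot (x : R) : R := cos x / sin x.

Definition xi (alpha : R) (n t : nat) : R :=
  frac_part (INR t * INR (cf_q alpha (n - 1)) / INR (cf_q alpha n)) - / 2.

Definition s_nt (alpha : R) (n t : nat) : R :=
  2 * sin (PI * (INR t / INR (cf_q alpha n) - Rabs (Lambda alpha n) * xi alpha n t)).

Definition h_nt (alpha : R) (n t : nat) : R :=
  cot (PI * INR t / INR (cf_q alpha n)) * sin (PI * Rabs (Lambda alpha n) * xi alpha n t).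

Definition irrational (x : R) : Prop :=
  ~ exists (p q : Z), q <> 0%Z /\ x = IZR p / IZR q.

From Pilot Require Import Defs.
From Stdlib Require Import Reals Lra Lia ZArith.
Open Scope R_scope.

(* (a) Since gcd(q_n, q_{n-1}) = 1, the number t q_{n-1} / q_n is not an integer
   for 0 < t < q_n, so its fractional part f satisfies {(q_n - t) q_{n-1} / q_n}
   = 1 - f; hence xi is odd under t -> q_n - t, and s and h are symmetric by
   sin (pi - x) = sin x and cos (pi - x) = - cos x.
   (b) With x_n the Gauss-map iterates, Lambda_{n+1} = - x_n Lambda_n, and the
   determinant identity q_n p_{n+1} - q_{n+1} p_n = +-1 becomes
   |Lambda_n| (q_{n+1} + q_n x_n) = 1, so q_n |Lambda_n| < 1 for every n >= 1.
   Then for 1 <= t < q_n the argument of the sine in s_{nt} stays in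
   (pi |Lambda_n| / 2, pi - pi |Lambda_n| / 2), while s_{n0} = 2 sin (pi |Lambda_n| / 2). *)

Lemma irrational_neq_IZR (x : R) (k : Z) : irrational x -> x <> IZR k.
Proof.
  intros Hx E. apply Hx. exists k, 1%Z. split; [lia|]. rewrite E. field.
Qed.

Lemma irrational_inv (x : R) : irrational x -> irrational (/ x).
Proof.
  intros Hx [p [q [Hq E]]]. apply Hx.
  assert (Hx0 : x <> 0) by exact (irrational_neq_IZR x 0 Hx).
  assert (Hp : p <> 0%Z).
  { intros ->. apply (Rinv_neq_0_compat x Hx0). rewrite E. unfold Rdiv. ring. }
  exists q, p. split; [exact Hp|].
  rewrite <- (Rinv_inv x), E. field. split; apply not_0_IZR; assumption.
Qed.

Lemma irrational_sub_IZR (x : R) (k : Z) : irrational x -> irrational (x - IZR k).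
Proof.
  intros Hx [p [q [Hq E]]]. apply Hx.
  exists (p + k * q)%Z, q. split; [exact Hq|].
  rewrite plus_IZR, mult_IZR. replace x with (x - IZR k + IZR k) by ring.
  rewrite E. field. apply not_0_IZR; assumption.
Qed.

Lemma frac_part_irrational_pos (x : R) : irrational x -> 0 < frac_part x.
Proof.
  intros Hx. destruct (base_fp x) as [H0 _]. destruct (Rge_gt_or_eq_dec _ _ H0) as [H|H].
  - exact H.
  - exfalso. apply (irrational_neq_IZR x (Int_part x) Hx).
    unfold frac_part in H. lra.
Qed.

Lemma cf_q_succ_succ (alpha : R) (n : nat) :
  cf_q alpha (S (S n)) = (cf_a alpha (S n) * cf_q alpha (S n) + cf_q alpha n)%nat.
Proof. reflexivity. Qed.

Lemma cf_p_succ_succ (alpha : R) (n : nat) :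
  cf_p alpha (S (S n)) = (cf_a alpha (S n) * cf_p alpha (S n) + cf_p alpha n)%nat.
Proof. reflexivity. Qed.

Lemma Lambda_succ_succ (alpha : R) (n : nat) :
  Lambda alpha (S (S n)) = INR (cf_a alpha (S n)) * Lambda alpha (S n) + Lambda alpha n.
Proof.
  unfold Lambda. rewrite cf_q_succ_succ, cf_p_succ_succ, !plus_INR, !mult_INR. ring.
Qed.

Lemma Rabs_cf_det (alpha : R) (n : nat) :
  Rabs (INR (cf_q alpha n) * INR (cf_p alpha (S n))
        - INR (cf_q alpha (S n)) * INR (cf_p alpha n)) = 1.
Proof.
  induction n as [|n IH].
  - simpl. rewrite Rabs_left; lra.
  - rewrite cf_q_succ_succ, cf_p_succ_succ, !plus_INR, !mult_INR, <- IH, <- Rabs_Ropp.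
    f_equal. ring.
Qed.

Lemma cf_q_coprime (alpha : R) (n : nat) :
  Nat.gcd (cf_q alpha (S n)) (cf_q alpha n) = 1%nat.
Proof.
  induction n as [|n IH]; [reflexivity|].
  rewrite cf_q_succ_succ, Nat.gcd_comm, Nat.add_comm, Nat.gcd_add_mult_diag_r. exact IH.
Qed.

Section GaussMap.

Variable alpha : R.
Hypothesis alpha_pos : 0 < alpha.
Hypothesis alpha_lt1 : alpha < 1.
Hypothesis alpha_irr : irrational alpha.

Lemma cf_x_bounds (k : nat) : 0 < cf_x alpha k < 1 /\ irrational (cf_x alpha k).
Proof.
  induction k as [|k [[Hx0 Hx1] Hirr]]; [auto|].
  assert (Hy : irrational (/ cf_x alpha k)) by (apply irrational_inv; exact Hirr).
  change (cf_x alpha (S k)) with (frac_part (/ cf_x alpha k)).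
  split; [split|].
  - apply frac_part_irrational_pos; exact Hy.
  - apply base_fp.
  - apply irrational_sub_IZR; exact Hy.
Qed.

Lemma INR_cf_a_succ (m : nat) :
  INR (cf_a alpha (S m)) = IZR (Int_part (/ cf_x alpha m)).
Proof.
  unfold cf_a. rewrite Nat.sub_succ, Nat.sub_0_r, INR_IZR_INZ, Z2Nat.id; [reflexivity|].
  destruct (cf_x_bounds m) as [[Hx0 _] _].
  destruct (base_Int_part (/ cf_x alpha m)) as [_ H].
  assert (0 < / cf_x alpha m) by (apply Rinv_0_lt_compat; exact Hx0).
  assert (Hk : -1 < IZR (Int_part (/ cf_x alpha m))) by lra.
  apply lt_IZR in Hk. lia.
Qed.

Lemma cf_a_ge1 (m : nat) : (1 <= cf_a alpha (S m))%nat.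
Proof.
  apply INR_le. rewrite INR_cf_a_succ. simpl.
  destruct (cf_x_bounds m) as [[Hx0 Hx1] _].
  assert (Hy : 1 < / cf_x alpha m) by (rewrite <- Rinv_1; apply Rinv_lt_contravar; lra).
  destruct (base_Int_part (/ cf_x alpha m)) as [_ Hfl].
  assert (Hk : 0 < IZR (Int_part (/ cf_x alpha m))) by lra.
  apply lt_IZR in Hk. apply IZR_le. lia.
Qed.

Lemma cf_x_succ (m : nat) : cf_x alpha (S m) = / cf_x alpha m - INR (cf_a alpha (S m)).
Proof. rewrite INR_cf_a_succ. reflexivity. Qed.

Lemma Lambda_succ (n : nat) : Lambda alpha (S n) = - cf_x alpha n * Lambda alpha n.
Proof.
  induction n as [|n IH]; [unfold Lambda; simpl; ring|].
  rewrite Lambda_succ_succ, cf_x_succ, IH.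
  destruct (cf_x_bounds n) as [[Hx0 _] _]. field. lra.
Qed.

Lemma cf_q_le_succ (n : nat) : (cf_q alpha n <= cf_q alpha (S n))%nat.
Proof.
  destruct n as [|n]; [simpl; lia|].
  rewrite cf_q_succ_succ. pose proof (cf_a_ge1 n). nia.
Qed.

Lemma Rabs_Lambda_mul (n : nat) :
  Rabs (Lambda alpha n) * (INR (cf_q alpha (S n)) + INR (cf_q alpha n) * cf_x alpha n) = 1.
Proof.
  rewrite <- (Rabs_cf_det alpha n).
  destruct (cf_x_bounds n) as [[Hx0 _] _].
  assert (Hpos : 0 <= INR (cf_q alpha (S n)) + INR (cf_q alpha n) * cf_x alpha n).
  { pose proof (pos_INR (cf_q alpha (S n))). pose proof (pos_INR (cf_q alpha n)). nra. }
  rewrite <- (Rabs_right _ (Rle_ge _ _ Hpos)), <- Rabs_mult. f_equal.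
  transitivity (INR (cf_q alpha (S n)) * Lambda alpha n - INR (cf_q alpha n) * Lambda alpha (S n)).
  - rewrite Lambda_succ. ring.
  - unfold Lambda. ring.
Qed.

Lemma cf_q_mul_Rabs_Lambda_lt1 (n : nat) :
  (1 <= cf_q alpha n)%nat -> INR (cf_q alpha n) * Rabs (Lambda alpha n) < 1.
Proof.
  intros Hq.
  pose proof (Rabs_Lambda_mul n) as Hid.
  destruct (cf_x_bounds n) as [[Hx0 _] _].
  assert (Hqq : INR (cf_q alpha n) <= INR (cf_q alpha (S n))) by apply le_INR, cf_q_le_succ.
  assert (Hq1 : 1 <= INR (cf_q alpha n)) by (apply (le_INR 1); exact Hq).
  assert (HL : 0 < Rabs (Lambda alpha n)).
  { destruct (Rabs_pos (Lambda alpha n)) as [H|H]; [exact H|]. rewrite <- H in Hid. lra. }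
  nra.
Qed.

End GaussMap.

Lemma frac_part_IZR_sub (k : Z) (x : R) :
  frac_part x <> 0 -> frac_part (IZR k - x) = 1 - frac_part x.
Proof.
  intros Hx. destruct (base_fp x) as [H0 H1].
  symmetry. apply (Int_part_frac_part_spec _ (k - Int_part x - 1)); [lra|].
  rewrite !minus_IZR. unfold frac_part. ring.
Qed.

Lemma frac_part_INR_div_eq0 (a b : nat) :
  (0 < b)%nat -> frac_part (INR a / INR b) = 0 -> Nat.divide b a.
Proof.
  intros Hb Hfr.
  assert (Hb' : 0 < INR b) by (apply lt_0_INR; exact Hb).
  set (k := Int_part (INR a / INR b)).
  assert (Ek : INR a / INR b = IZR k) by (unfold frac_part in Hfr; fold k in Hfr; lra).
  assert (Hk : (0 <= k)%Z).
  { apply le_IZR. rewrite <- Ek.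
    apply Rmult_le_pos; [apply pos_INR | left; apply Rinv_0_lt_compat; exact Hb']. }
  exists (Z.to_nat k). apply INR_eq.
  rewrite mult_INR, (INR_IZR_INZ (Z.to_nat k)), Z2Nat.id by exact Hk.
  rewrite <- Ek. field. lra.
Qed.

Lemma xi_bounds (alpha : R) (n t : nat) : - / 2 <= xi alpha n t < / 2.
Proof.
  (* [Defs.frac_part] has the same body as Stdlib's [frac_part], whose lemmas we use. *)
  unfold xi. change Defs.frac_part with frac_part.
  destruct (base_fp (INR t * INR (cf_q alpha (n - 1)) / INR (cf_q alpha n))). lra.
Qed.

Lemma xi_0 (alpha : R) (n : nat) : xi alpha n 0 = - / 2.
Proof.
  unfold xi. change Defs.frac_part with frac_part.
  rewrite Rmult_0_l, Rdiv_0_l, fp_R0. ring.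
Qed.

Lemma xi_reflect (alpha : R) (m t : nat) :
  (1 <= t)%nat -> (t < cf_q alpha (S m))%nat ->
  xi alpha (S m) (cf_q alpha (S m) - t) = - xi alpha (S m) t.
Proof.
  intros Ht1 Htq. unfold xi. change Defs.frac_part with frac_part.
  rewrite Nat.sub_succ, Nat.sub_0_r.
  set (q := cf_q alpha (S m)) in *. set (q' := cf_q alpha m).
  assert (Hq : 0 < INR q) by (apply lt_0_INR; lia).
  assert (Hnz : frac_part (INR t * INR q' / INR q) <> 0).
  { rewrite <- mult_INR. intros Hfr.
    apply frac_part_INR_div_eq0 in Hfr; [|lia].
    rewrite Nat.mul_comm in Hfr. apply Nat.gauss in Hfr; [|apply cf_q_coprime].
    apply Nat.divide_pos_le in Hfr; lia. }
  replace (INR (q - t) * INR q' / INR q) with (IZR (Z.of_nat q') - INR t * INR q' / INR q)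
    by (rewrite minus_INR, <- INR_IZR_INZ by lia; field; lra).
  rewrite frac_part_IZR_sub by exact Hnz. field.
Qed.

Lemma sin_lt_sin_between (a x : R) : 0 <= a -> a < x -> x < PI - a -> sin a < sin x.
Proof.
  intros Ha Hax HxPI. pose proof PI_RGT_0.
  destruct (Rle_or_lt x (PI / 2)) as [Hx|Hx].
  - apply sin_increasing_1; lra.
  - rewrite <- (sin_PI_x x). apply sin_increasing_1; lra.
Qed.

Lemma s_nt_reflect (alpha : R) (n t : nat) :
  (t <= cf_q alpha n)%nat -> (0 < cf_q alpha n)%nat ->
  xi alpha n (cf_q alpha n - t) = - xi alpha n t ->
  s_nt alpha n (cf_q alpha n - t) = s_nt alpha n t.
Proof.
  intros Htq Hq Hxi. unfold s_nt. rewrite Hxi, minus_INR by exact Htq.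
  assert (0 < INR (cf_q alpha n)) by (apply lt_0_INR; exact Hq).
  rewrite <- sin_PI_x. f_equal. f_equal. field. lra.
Qed.

Lemma h_nt_reflect (alpha : R) (n t : nat) :
  (t <= cf_q alpha n)%nat -> (0 < cf_q alpha n)%nat ->
  xi alpha n (cf_q alpha n - t) = - xi alpha n t ->
  h_nt alpha n (cf_q alpha n - t) = h_nt alpha n t.
Proof.
  intros Htq Hq Hxi. unfold h_nt, cot. rewrite Hxi, minus_INR by exact Htq.
  assert (0 < INR (cf_q alpha n)) by (apply lt_0_INR; exact Hq).
  replace (PI * (INR (cf_q alpha n) - INR t) / INR (cf_q alpha n))
    with (PI - PI * INR t / INR (cf_q alpha n)) by (field; lra).
  rewrite sin_PI_x, Rtrigo_facts.cos_pi_minus, <- Ropp_mult_distr_r, sin_neg.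
  unfold Rdiv. ring.
Qed.

Lemma s_nt_0 (alpha : R) (n : nat) :
  s_nt alpha n 0 = 2 * sin (PI * Rabs (Lambda alpha n) / 2).
Proof.
  unfold s_nt. rewrite xi_0. simpl INR. unfold Rdiv. rewrite Rmult_0_l.
  f_equal. f_equal. field.
Qed.

Lemma s_nt_gt_s_nt_0 (alpha : R) (n t : nat) :
  INR (cf_q alpha n) * Rabs (Lambda alpha n) < 1 ->
  (1 <= t)%nat -> (t < cf_q alpha n)%nat -> s_nt alpha n t > s_nt alpha n 0.
Proof.
  intros HqL Ht1 Htq. rewrite s_nt_0. unfold s_nt.
  apply Rmult_gt_compat_l; [lra|].
  set (q := INR (cf_q alpha n)) in *. set (L := Rabs (Lambda alpha n)) in *.
  assert (Hq : 0 < q) by (apply lt_0_INR; lia).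
  assert (Ht : 1 <= INR t <= q - 1).
  { split; [apply (le_INR 1); exact Ht1|].
    assert (INR (S t) <= q) by (apply le_INR; exact Htq). rewrite S_INR in *. lra. }
  assert (HL : 0 <= L) by apply Rabs_pos.
  assert (HLq : L < 1 / q) by (apply (Rmult_lt_reg_l q); [exact Hq|]; field_simplify; lra).
  assert (Htq1 : 1 / q <= INR t / q <= 1 - 1 / q).
  { unfold Rdiv. split; [apply Rmult_le_compat_r|]; [left; apply Rinv_0_lt_compat; lra|lra|].
    apply (Rmult_le_reg_l q); [exact Hq|]. field_simplify; lra. }
  assert (HLxi : - (L / 2) <= L * xi alpha n t <= L / 2).
  { destruct (xi_bounds alpha n t). split; nra. }
  pose proof PI_RGT_0.
  apply sin_lt_sin_between.
  - nra.
  - assert (0 < INR t / q - L * xi alpha n t - L / 2) by lra. nra.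
  - assert (0 < 1 - (INR t / q - L * xi alpha n t) - L / 2) by lra. nra.
Qed.

Theorem lemma4p2 (alpha : R) (Hpos : 0 < alpha) (Hlt1 : alpha < 1)
    (Hirr : irrational alpha) :
  (forall (n t : nat), (1 <= t)%nat -> (t < cf_q alpha n)%nat ->
      s_nt alpha n t = s_nt alpha n (cf_q alpha n - t)
   /\ h_nt alpha n t = h_nt alpha n (cf_q alpha n - t)
   /\ xi alpha n t = - xi alpha n (cf_q alpha n - t))
  /\
  (exists N : nat, forall n : nat, (N <= n)%nat ->
     forall t : nat, (1 <= t)%nat -> (t < cf_q alpha n)%nat ->
       s_nt alpha n t > s_nt alpha n 0).
Proof.
  split.
  - intros n t Ht1 Htq.
    destruct n as [|m]; [simpl in Htq; lia|].
    pose proof (xi_reflect alpha m t Ht1 Htq) as Hxi.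
    split; [|split].
    + symmetry. apply s_nt_reflect; [lia | lia | exact Hxi].
    + symmetry. apply h_nt_reflect; [lia | lia | exact Hxi].
    + rewrite Hxi. ring.
  - exists 0%nat. intros n _ t Ht1 Htq.
    apply s_nt_gt_s_nt_0; [|exact Ht1 | exact Htq].
    apply cf_q_mul_Rabs_Lambda_lt1; [exact Hpos | exact Hlt1 | exact Hirr | lia].
Qed.
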